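(* Let $\mathbf{x}=(x_s)\in\mathbb{C}^{\mathbb{Z}^2}$ satisfy $Q^C(\mathbf{x})=0$ for every unit square $C$ in $\mathbb{Z}^2$. Then for every $v\in\mathbb{Z}^2$, $$\Big(\prod_{C\ni v}Q^C_v(\mathbf{x})\Big)^2=\Big(\prod_{S\ni v}(x_v+x_{v_1})\Big)^2,$$ where the first product is over the $4$ unit squares containing $v$ and the second over the $4$ unit edges $S$ containing $v$, $v_1$ denoting the other endpoint of $S$. Moreover, $$\big(Q_v^{C_v(1,1)}(\mathbf{x})Q_v^{C_v(-1,-1)}(\mathbf{x})\big)^2=\big(Q_v^{C_v(1,-1)}(\mathbf{x})Q_v^{C_v(-1,1)}(\mathbf{x})\big)^2=\prod_{S\ni v}(x_v+x_{v_1}).$$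
   Context: For a unit square $C$ in $\mathbb{Z}^2$ with values $z_{00},z_{10},z_{01},z_{11}$ at its vertices (via an identification $C\cong\{0,1\}^2$), $Q^C(\mathbf{x})=z_{00}^2+z_{10}^2+z_{01}^2+z_{11}^2-2(z_{00}z_{10}+z_{10}z_{11}+z_{11}z_{01}+z_{01}z_{00})-6(z_{00}z_{11}+z_{10}z_{01})$. For a vertex $v$ of $C$, with the labeling chosen so that $z_{00}=x_v$, $Q^C_v(\mathbf{x})=\frac{1}{2\sqrt2}(z_{11}-z_{10}-z_{01}-3z_{00})$. For $v\in\mathbb{Z}^2$ and $i_1,i_2\in\{-1,1\}$, $C_v(i_1,i_2)$ is the unit square containing $v$ and $v+(i_1,i_2)$. *)

(* The field of complex numbers is generalized to an arbitrary
   numClosedFieldType C (which includes the complex numbers); sqrtC gives sqrt 2. *)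
From HB Require Import structures.
From mathcomp Require Import all_boot all_order all_algebra.
Set Implicit Arguments. Unset Strict Implicit. Unset Printing Implicit Defensive.
Import Order.TTheory GRing.Theory Num.Theory.
Local Open Scope ring_scope.

Definition pt := (int * int)%type.

Definition Qsq (C : numClosedFieldType) (z00 z10 z01 z11 : C) : C :=
  z00 ^+ 2 + z10 ^+ 2 + z01 ^+ 2 + z11 ^+ 2
  - 2 * (z00 * z10 + z10 * z11 + z11 * z01 + z01 * z00)
  - 6 * (z00 * z11 + z10 * z01).

(* Q^C_v with labeling z00 = x_v. *)
Definition Qvert (C : numClosedFieldType) (z00 z10 z01 z11 : C) : C :=
  (z11 - z10 - z01 - 3 * z00) / (2 * sqrtC 2).

Definition QC (C : numClosedFieldType) (x : pt -> C) (a b : int) : C :=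
  Qsq (x (a, b)) (x (a + 1, b)) (x (a, b + 1)) (x (a + 1, b + 1)).

(* Q_v^{C_v(i1,i2)}(x), where C_v(i1,i2) is the unit square containing v and
   v + (i1,i2); labeling z00 = x_v, z10 = x_{v+(i1,0)}, z01 = x_{v+(0,i2)},
   z11 = x_{v+(i1,i2)}. *)
Definition Qv (C : numClosedFieldType) (x : pt -> C) (v : pt) (i1 i2 : int) : C :=
  Qvert (x v) (x (v.1 + i1, v.2)) (x (v.1, v.2 + i2)) (x (v.1 + i1, v.2 + i2)).

Definition edge_prod (C : numClosedFieldType) (x : pt -> C) (v : pt) : C :=
  (x v + x (v.1 + 1, v.2)) * (x v + x (v.1 - 1, v.2))
  * (x v + x (v.1, v.2 + 1)) * (x v + x (v.1, v.2 - 1)).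

(* Expanding gives the identity (z11 - z10 - z01 - 3 z00)^2 = Q^C + 8 (z00 + z10)(z00 + z01),
   so on the quadric Q^C = 0 the square of Q^C_v is the product of the two edge factors
   x_v + x_{v_1} over the edges of C at v.  Q^C is invariant under the symmetries of the
   square, so this applies to each of the four squares containing v, whatever corner v
   occupies.  Each edge at v lies in exactly two of these squares, and each of the pairs
   {C_v(1,1), C_v(-1,-1)} and {C_v(1,-1), C_v(-1,1)} covers all four edges once. *)
From HB Require Import structures.
From mathcomp Require Import all_boot all_order all_algebra.
From mathcomp Require Import ring.
Import Order.TTheory GRing.Theory Num.Theory.
Local Open Scope ring_scope.

Section SquareForm.

Variable C : numClosedFieldType.

Lemma Qsq_swap_rows (z00 z10 z01 z11 : C) : Qsq z00 z10 z01 z11 = Qsq z01 z11 z00 z10.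
Proof. by rewrite /Qsq; ring. Qed.

Lemma Qsq_swap_cols (z00 z10 z01 z11 : C) : Qsq z00 z10 z01 z11 = Qsq z10 z00 z11 z01.
Proof. by rewrite /Qsq; ring. Qed.

Lemma Qvert_sqrE (z00 z10 z01 z11 : C) :
  Qvert z00 z10 z01 z11 ^+ 2 = (z00 + z10) * (z00 + z01) + Qsq z00 z10 z01 z11 / 8.
Proof. by rewrite /Qvert /Qsq expr_div_n exprMn sqrtCK; field. Qed.

Lemma Qvert_sqr (z00 z10 z01 z11 : C) :
  Qsq z00 z10 z01 z11 = 0 -> Qvert z00 z10 z01 z11 ^+ 2 = (z00 + z10) * (z00 + z01).
Proof. by move=> Q0; rewrite Qvert_sqrE Q0 mul0r addr0. Qed.

End SquareForm.

Lemma Qv_sqr (C : numClosedFieldType) (x : pt -> C) (v : pt) (i1 i2 : int) :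
  (forall a b : int, QC x a b = 0) -> i1 \in [:: 1; -1] -> i2 \in [:: 1; -1] ->
  Qv x v i1 i2 ^+ 2 = (x v + x (v.1 + i1, v.2)) * (x v + x (v.1, v.2 + i2)).
Proof.
case: v => a b /= QC0; rewrite !inE => /orP[] /eqP-> /orP[] /eqP->; apply: Qvert_sqr.
- exact: QC0.
- by rewrite Qsq_swap_rows -(QC0 a (b - 1)) /QC subrK.
- by rewrite Qsq_swap_cols -(QC0 (a - 1) b) /QC subrK.
- by rewrite Qsq_swap_rows Qsq_swap_cols -(QC0 (a - 1) (b - 1)) /QC !subrK.
Qed.

Theorem proposition5p4 (C : numClosedFieldType) (x : pt -> C) :
  (forall a b : int, QC x a b = 0) ->
  forall v : pt,
    (Qv x v 1 1 * Qv x v 1 (-1) * Qv x v (-1) 1 * Qv x v (-1) (-1)) ^+ 2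
      = (edge_prod x v) ^+ 2
    /\ (Qv x v 1 1 * Qv x v (-1) (-1)) ^+ 2 = edge_prod x v
    /\ (Qv x v 1 (-1) * Qv x v (-1) 1) ^+ 2 = edge_prod x v.
Proof.
move=> QC0 v.
have diagonal : (Qv x v 1 1 * Qv x v (-1) (-1)) ^+ 2 = edge_prod x v.
  by rewrite exprMn !Qv_sqr // /edge_prod; ring.
have antidiagonal : (Qv x v 1 (-1) * Qv x v (-1) 1) ^+ 2 = edge_prod x v.
  by rewrite exprMn !Qv_sqr // /edge_prod; ring.
(* Abstracting the four values keeps [ring] from unfolding them. *)
move: (Qv x v 1 1) (Qv x v 1 (-1)) (Qv x v (-1) 1) (Qv x v (-1) (-1)) diagonal antidiagonal
  => q11 q1m qm1 qmm diagonal antidiagonal.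
by split=> //; rewrite [RHS]expr2 -{1}diagonal -antidiagonal; ring.
Qed.
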